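(* Let $\mu$ be a positive finite Borel measure supported in $[0,1]$. Let $\mathcal{D}\subset\ell^2(\mathbb{Z})$ be the subspace of finitely supported sequences, and define $F:\mathcal{D}\to L^2(\mu)$ by $F((c_k)_{k\in\mathbb{Z}})(x)=\sum_k c_k e_k(x)$, where $e_k(x)=e^{i2\pi kx}$. If $$\sum_{k\in\mathbb{Z}}\Big|\int e_k(x)\,d\mu(x)\Big|^2<\infty,$$ then the operator $F$ (as a densely defined operator from $\ell^2(\mathbb{Z})$ into $L^2(\mu)$) is closable.
   Context: An operator is closable if the closure of its graph is the graph of a linear operator. *)

From HB Require Import structures.
From mathcomp Require Import all_boot all_order all_algebra.
From mathcomp Require Import all_classical all_reals all_analysis.
From mathcomp.real_closed Require Import complex.

Set Implicit Arguments.
Unset Strict Implicit.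
Unset Printing Implicit Defensive.

Import Order.TTheory GRing.Theory Num.Theory.
Import numFieldNormedType.Exports.

Local Open Scope classical_set_scope.
Local Open Scope ring_scope.

Section L2closable.
Variable R : realType.

Definition cabs2 (z : R[i]) : R := complex.Re z ^+ 2 + complex.Im z ^+ 2.

Definition ek (k : int) (x : R) : R[i] :=
  Complex (cos (2 * pi * k%:~R * x)) (sin (2 * pi * k%:~R * x)).

Definition cintegral (mu : {measure set R -> \bar R}) (f : R -> R[i]) : R[i] :=
  Complex (\int[mu]_x (complex.Re (f x)))%R (\int[mu]_x (complex.Im (f x)))%R.

Definition in_l2 (c : int -> R[i]) : Prop :=
  (\esum_(k in [set: int]) (cabs2 (c k))%:E < +oo)%E.

Definition l2dist2 (c d : int -> R[i]) : \bar R :=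
  \esum_(k in [set: int]) (cabs2 (c k - d k))%:E.

Definition finsupp (c : int -> R[i]) : Prop := finite_set [set k | c k != 0].

Definition in_L2 (mu : {measure set R -> \bar R}) (g : R -> R[i]) : Prop :=
  [/\ measurable_fun setT (fun x => complex.Re (g x)),
      measurable_fun setT (fun x => complex.Im (g x)) &
      (\int[mu]_x (cabs2 (g x))%:E < +oo)%E].

Definition L2dist2 (mu : {measure set R -> \bar R}) (f g : R -> R[i]) : \bar R :=
  \int[mu]_x (cabs2 (f x - g x))%:E.

(* the operator F on D: F c (x) = sum_k c_k e_k(x) (finite sum over the support) *)
Definition Fop (c : int -> R[i]) (x : R) : R[i] :=
  \sum_(k \in [set: int]) (c k * ek k x).

(* closure in l^2(Z) x L^2(mu) of the graph {(c, F c) | c in D}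
   (sequential closure; both spaces are (pseudo)metric) *)
Definition graph_closure (mu : {measure set R -> \bar R}) :
    set ((int -> R[i]) * (R -> R[i])) :=
  [set cg | [/\ in_l2 cg.1, in_L2 mu cg.2 &
    exists u : nat -> int -> R[i],
      [/\ forall n, finsupp (u n),
          l2dist2 (u n) cg.1 @[n --> \oo] --> 0%E &
          L2dist2 mu (Fop (u n)) cg.2 @[n --> \oo] --> 0%E]]].

(* S (a subset of l^2(Z) x L^2(mu)) is the graph of a linear operator
   T : Dom T (subset of l^2(Z)) -> L^2(mu); elements of L^2(mu) are
   identified up to mu-a.e. equality. *)
Definition graph_of_linear_operator (mu : {measure set R -> \bar R})
    (S : set ((int -> R[i]) * (R -> R[i]))) : Prop :=
  exists (Dom : set (int -> R[i])) (T : (int -> R[i]) -> R -> R[i]),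
    [/\ Dom (fun _ => 0),
        forall (a : R[i]) c d, Dom c -> Dom d -> Dom (fun k => a * c k + d k),
        forall c, Dom c -> in_l2 c /\ in_L2 mu (T c),
        forall (a : R[i]) c d, Dom c -> Dom d ->
          {ae mu, forall x, T (fun k => a * c k + d k) x = a * T c x + T d x} &
        forall c g, in_L2 mu g ->
          (S (c, g) <-> Dom c /\ {ae mu, forall x, g x = T c x})].

Definition closable (mu : {measure set R -> \bar R}) : Prop :=
  graph_of_linear_operator mu (graph_closure mu).

End L2closable.

(* Closability amounts to: if [u_n -> 0] in l^2(Z) and [F u_n -> h] in L^2(mu),
   then [h = 0] mu-a.e. (linearity then passes to the limits).  Writing
   [m j = \int e_j dmu], one has [<F u_n, s e_k> = Re (sum_j u_n j s^* m (j - k))],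
   which a weighted AM-GM inequality bounds by
   [t/2 ||u_n||^2 + |s|^2 (sum_j |m j|^2) / (2 t)] for every [t > 0].  Together with
   [||h - F u_n|| -> 0] this gives [<h, s e_k> = 0] for all [s] and [k], hence
   [<h, F u_n> = 0] and [||h||^2 = <h - F u_n, h> -> 0].  Weighted AM-GM bounds
   replace Cauchy-Schwarz throughout, so no square roots are taken. *)

From HB Require Import structures.
From mathcomp Require Import all_boot all_order all_algebra.
From mathcomp Require Import all_classical all_reals all_analysis.
From mathcomp.real_closed Require Import complex.
From mathcomp Require Import ring lra measurable_realfun.

Import Order.TTheory GRing.Theory Num.Theory.

Local Open Scope classical_set_scope.
Local Open Scope ring_scope.
Set Implicit Arguments.
Unset Strict Implicit.

Local Notation Re := complex.Re.
Local Notation Im := complex.Im.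

Section ComplexFacts.
Variable R : realType.
Implicit Types (z w a b : R[i]) (x y t : R).

Lemma complexReM a b : Re (a * b) = Re a * Re b - Im a * Im b.
Proof. by case: a => ? ?; case: b. Qed.

Lemma complexImM a b : Im (a * b) = Re a * Im b + Im a * Re b.
Proof. by case: a => ? ?; case: b. Qed.

Lemma cabs2_ge0 z : 0 <= cabs2 z.
Proof. by rewrite /cabs2 addr_ge0 // sqr_ge0. Qed.

Lemma cabs2M a z : cabs2 (a * z) = cabs2 a * cabs2 z.
Proof. by rewrite /cabs2 complexReM complexImM; ring. Qed.

Lemma cabs2_conjc z : cabs2 z^*%C = cabs2 z.
Proof. by case: z => a b; rewrite /cabs2 /= sqrrN. Qed.

Lemma cabs2_eq0 z : cabs2 z = 0 -> z = 0.
Proof.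
case: z => a b; rewrite /cabs2 /= => /eqP; rewrite paddr_eq0 ?sqr_ge0 //.
by rewrite !sqrf_eq0 => /andP[/eqP -> /eqP ->].
Qed.

Lemma cabs2B_le z w : cabs2 (z - w) <= 2 * cabs2 z + 2 * cabs2 w.
Proof.
rewrite /cabs2 !raddfB /= -subr_ge0.
have -> : 2 * (Re z ^+ 2 + Im z ^+ 2) + 2 * (Re w ^+ 2 + Im w ^+ 2)
    - ((Re z - Re w) ^+ 2 + (Im z - Im w) ^+ 2)
    = (Re z + Re w) ^+ 2 + (Im z + Im w) ^+ 2 by ring.
by rewrite addr_ge0 ?sqr_ge0.
Qed.

Lemma cabs2D_le z w : cabs2 (z + w) <= 2 * cabs2 z + 2 * cabs2 w.
Proof.
have cabs2N : cabs2 (- w) = cabs2 w by rewrite /cabs2 !raddfN /= !sqrrN.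
by rewrite -cabs2N -{1}(opprK w) cabs2B_le.
Qed.

Lemma cabs2_linB_le a z z' w w' :
  cabs2 ((a * z + w) - (a * z' + w')) <= 2 * cabs2 a * cabs2 (z - z') + 2 * cabs2 (w - w').
Proof.
have -> : (a * z + w) - (a * z' + w') = a * (z - z') + (w - w') by ring.
by apply: le_trans (cabs2D_le _ _) _; rewrite cabs2M mulrA.
Qed.

Lemma normrM_le_amgm x y t : 0 < t -> 2 * `|x * y| <= t * x ^+ 2 + y ^+ 2 / t.
Proof.
move=> t0; set u := y / t.
have yE : y = t * u by rewrite /u mulrC divfK // gt_eqF.
have -> : y ^+ 2 / t = t * u ^+ 2 by rewrite yE; field; rewrite gt_eqF.
rewrite yE normrM (normrM t) (gtr0_norm t0).
rewrite -[x ^+ 2]real_normK ?num_real // -[u ^+ 2]real_normK ?num_real //.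
have := sqr_ge0 (`|x| - `|u|); have := normr_ge0 x; have := normr_ge0 u.
nra.
Qed.

Lemma normr_ReM_le a b t : 0 < t ->
  `|Re (a * b)| <= t / 2 * cabs2 a + 1 / (2 * t) * cabs2 b.
Proof.
move=> t0; rewrite complexReM /cabs2.
have h1 := normrM_le_amgm (Re a) (Re b) t0.
have h2 := normrM_le_amgm (Im a) (Im b) t0.
have h3 := ler_normB (Re a * Re b) (Im a * Im b).
have -> : 1 / (2 * t) * (Re b ^+ 2 + Im b ^+ 2) = (Re b ^+ 2 / t + Im b ^+ 2 / t) / 2.
  by field; rewrite gt_eqF.
lra.
Qed.

Lemma le0_of_le_div_add_mul x C : 0 <= C ->
  (forall t e, 0 < t -> 0 < e -> x <= C / t + t * e) -> x <= 0.
Proof.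
move=> C0 H; rewrite leNgt; apply/negP => x0.
pose t := 4 * (C + 1) / x.
have t0 : 0 < t by rewrite /t divr_gt0 // mulr_gt0 //; lra.
have := H t (x / (4 * t)) t0 (divr_gt0 x0 (mulr_gt0 (ltr0n _ 4) t0)).
have -> : t * (x / (4 * t)) = x / 4 by field; rewrite gt_eqF.
have -> : C / t = C * x / (4 * (C + 1)).
  by rewrite /t; field; apply/andP; split; rewrite gt_eqF //; lra.
have : C * x / (4 * (C + 1)) <= x / 4.
  rewrite ler_pdivrMr; last lra.
  have -> : x / 4 * (4 * (C + 1)) = x * (C + 1) by field.
  nra.
lra.
Qed.

End ComplexFacts.

Section ExtendedSums.
Variable R : realType.
Local Open Scope ereal_scope.

Lemma esumZl_le (I : choiceType) (A : set I) (r : R) (b : I -> \bar R) :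
  (0 <= r)%R -> (forall i, 0 <= b i) ->
  \esum_(i in A) (r%:E * b i) <= r%:E * \esum_(i in A) b i.
Proof.
move=> r0 b0; apply: ge_ereal_sup => _ [X [finX XA] <-].
rewrite -ge0_mule_fsumr //; apply: lee_wpmul2l; first by rewrite lee_fin.
by apply: ereal_sup_ubound; exists X.
Qed.

Lemma sum_le_esum (I : choiceType) (r : seq I) (f : I -> R) :
  uniq r -> (forall i, (0 <= f i)%R) ->
  (\sum_(i <- r) f i)%:E <= \esum_(i in [set: I]) (f i)%:E.
Proof.
move=> ur f0; apply: esum_ge; exists [set` r].
  by split => //; exact: finite_seq.
by rewrite -sumEFin fsbig_seq.
Qed.

Lemma esum_cabs2_le (I : choiceType) (x y z : I -> R[i]) (a b : R) :
  (0 <= a)%R -> (0 <= b)%R ->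
  (forall i, cabs2 (x i) <= a * cabs2 (y i) + b * cabs2 (z i))%R ->
  \esum_(i in [set: I]) (cabs2 (x i))%:E <=
  a%:E * (\esum_(i in [set: I]) (cabs2 (y i))%:E) +
  b%:E * (\esum_(i in [set: I]) (cabs2 (z i))%:E).
Proof.
move=> a0 b0 xyz.
apply: le_trans (le_esum (b := fun i => a%:E * (cabs2 (y i))%:E +
                                       b%:E * (cabs2 (z i))%:E) _) _.
  by move=> i _; rewrite -!EFinM -EFinD lee_fin.
rewrite esumD; last 2 first.
- by move=> i _; rewrite mule_ge0 ?lee_fin ?cabs2_ge0.
- by move=> i _; rewrite mule_ge0 ?lee_fin ?cabs2_ge0.
by apply: leeD; apply: esumZl_le => // i; rewrite lee_fin cabs2_ge0.
Qed.

Lemma nonneg_cvg0P (x : nat -> \bar R) : (forall n, 0 <= x n) ->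
  (x n @[n --> \oo] --> 0) <->
  (forall e : R, (0 < e)%R -> \forall n \near \oo, x n <= e%:E).
Proof.
move=> x0; split.
  move=> /fine_cvgP [xfin xc] e e0.
  move/cvgrPdist_lt: xc => /(_ e e0) xc.
  near=> n.
  have xn : x n \is a fin_num by near: n.
  have hn : (`|0 - (fine \o x) n| < e)%R by near: n.
  rewrite sub0r normrN /= in hn.
  by rewrite -(fineK xn) lee_fin ltW // (le_lt_trans (ler_norm _) hn).
move=> H; apply/fine_cvgP; split.
  near=> n.
  have xn : x n <= 1%:E by near: n; exact: H.
  by rewrite ge0_fin_numE ?(le_lt_trans xn) ?ltry.
apply/cvgrPdist_lt => e e0.
near=> n.
have xn : x n <= (e / 2)%:E by near: n; apply: H; rewrite divr_gt0.
rewrite sub0r normrN /= ger0_norm ?fine_ge0 //.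
have xfin : x n \is a fin_num by rewrite ge0_fin_numE ?(le_lt_trans xn) ?ltry.
rewrite -lte_fin fineK // (le_lt_trans xn) // lte_fin; lra.
Unshelve. all: end_near.
Qed.

Lemma cvg0_le_comb (x X Y : nat -> \bar R) (a b : R) : (0 <= a)%R -> (0 <= b)%R ->
  (forall n, 0 <= x n) -> (forall n, 0 <= X n) -> (forall n, 0 <= Y n) ->
  (forall n, x n <= a%:E * X n + b%:E * Y n) ->
  X n @[n --> \oo] --> 0 -> Y n @[n --> \oo] --> 0 -> x n @[n --> \oo] --> 0.
Proof.
move=> a0 b0 x0 X0 Y0 hx cX cY; apply/(nonneg_cvg0P x0) => e e0.
have e'0 : (0 < e / (a + b + 1))%R by rewrite divr_gt0 //; lra.
have HX := (nonneg_cvg0P X0).1 cX _ e'0; have HY := (nonneg_cvg0P Y0).1 cY _ e'0.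
near=> n.
have hX : X n <= (e / (a + b + 1))%:E by near: n; exact: HX.
have hY : Y n <= (e / (a + b + 1))%:E by near: n; exact: HY.
apply: le_trans (hx n) _.
apply: le_trans (leeD (lee_wpmul2l _ hX) (lee_wpmul2l _ hY)) _; rewrite ?lee_fin //.
rewrite -mulrDl mulrCA; apply: ler_piMr; first exact: ltW.
rewrite ler_pdivrMr; lra.
Unshelve. all: end_near.
Qed.

Lemma lty_comb (a b : R) (X Y : \bar R) : (0 <= a)%R -> (0 <= b)%R ->
  0 <= X -> 0 <= Y -> X < +oo -> Y < +oo -> a%:E * X + b%:E * Y < +oo.
Proof.
move=> a0 b0 X0 Y0 X1 Y1.
rewrite -ge0_fin_numE; last by rewrite adde_ge0 // mule_ge0 // lee_fin.
by rewrite fin_numD !fin_numM // ge0_fin_numE.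
Qed.

Lemma le_comb_of_lee (x a b x1 y1 : R) (X Y : \bar R) : (0 <= a)%R -> (0 <= b)%R ->
  x%:E <= a%:E * X + b%:E * Y -> X <= x1%:E -> Y <= y1%:E -> (x <= a * x1 + b * y1)%R.
Proof.
move=> a0 b0 h hX hY; rewrite -lee_fin; apply: (le_trans h).
by rewrite EFinD !EFinM leeD // lee_wpmul2l // lee_fin.
Qed.

End ExtendedSums.

Section Measurability.
Variable R : realType.
Implicit Types (f g : R -> R[i]).

Definition cmeasurable f :=
  measurable_fun setT (fun x => Re (f x)) /\ measurable_fun setT (fun x => Im (f x)).

Lemma measurable_cabs2 f : cmeasurable f -> measurable_fun setT (fun x => cabs2 (f x)).
Proof.
by case=> mRe mIm; apply: measurable_funD; under eq_fun do rewrite expr2;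
  apply: measurable_funM.
Qed.

Lemma measurable_cabs2E f : cmeasurable f -> measurable_fun setT (fun x => (cabs2 (f x))%:E).
Proof. by move=> mf; apply/measurable_EFinP; exact: measurable_cabs2. Qed.

Lemma measurable_cosM (c : R) : measurable_fun setT (fun x : R => cos (c * x)).
Proof.
apply: measurableT_comp; first by apply: continuous_measurable_fun; exact: continuous_cos.
by apply: measurable_funM => //; exact: measurable_id.
Qed.

Lemma measurable_sinM (c : R) : measurable_fun setT (fun x : R => sin (c * x)).
Proof.
apply: measurableT_comp; first by apply: continuous_measurable_fun; exact: continuous_sin.
by apply: measurable_funM => //; exact: measurable_id.
Qed.

Lemma cmeasurable_ek k : cmeasurable (ek k).
Proof. by split; [exact: measurable_cosM|exact: measurable_sinM]. Qed.

Lemma cmeasurableD f g : cmeasurable f -> cmeasurable g -> cmeasurable (fun x => f x + g x).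
Proof.
move=> [f1 f2] [g1 g2]; split.
  by under eq_fun do rewrite raddfD; exact: measurable_funD.
by under eq_fun do rewrite raddfD; exact: measurable_funD.
Qed.

Lemma cmeasurableZ (s : R[i]) f : cmeasurable f -> cmeasurable (fun x => s * f x).
Proof.
move=> [f1 f2]; split.
  have -> : (fun x => Re (s * f x)) =
      (cst (Re s) \* (fun x => Re (f x))) \- (cst (Im s) \* (fun x => Im (f x))).
    by apply/funext => x; rewrite complexReM.
  by apply: measurable_funB; apply: measurable_funM => //; exact: measurable_cst.
have -> : (fun x => Im (s * f x)) =
    (cst (Re s) \* (fun x => Im (f x))) \+ (cst (Im s) \* (fun x => Re (f x))).
  by apply/funext => x; rewrite complexImM.
by apply: measurable_funD; apply: measurable_funM => //; exact: measurable_cst.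
Qed.

Definition dotc (a b : R[i]) : R := Re a * Re b + Im a * Im b.

Lemma measurable_dotc f g : cmeasurable f -> cmeasurable g ->
  measurable_fun setT (fun x => dotc (f x) (g x)).
Proof.
by move=> [f1 f2] [g1 g2]; apply: measurable_funD; apply: measurable_funM.
Qed.

Lemma normr_dotc_le (a b : R[i]) t : 0 < t ->
  `|dotc a b| <= t / 2 * cabs2 a + 1 / (2 * t) * cabs2 b.
Proof.
move=> t0; rewrite -(cabs2_conjc b).
have -> : dotc a b = Re (a * b^*%C) by case: b => ? ?; rewrite /dotc complexReM /=; ring.
exact: normr_ReM_le.
Qed.

End Measurability.

Section L2.
Variable R : realType.
Variable mu : {finite_measure set R -> \bar R}.
Implicit Types (f g h : R -> R[i]).

Definition L2norm2 f := (\int[mu]_x (cabs2 (f x))%:E)%E.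

(* Only the real part of the inner product: [dotL2 h (s * e_k) = 0] for all
   complex [s] already says that [h] is orthogonal to [e_k]. *)
Definition dotL2 f g := \int[mu]_x dotc (f x) (g x).

Lemma L2norm2_ge0 f : (0 <= L2norm2 f)%E.
Proof. by apply: integral_ge0 => x _; rewrite lee_fin cabs2_ge0. Qed.

Lemma in_L2_cmeasurable f : in_L2 mu f -> cmeasurable f.
Proof. by case. Qed.

Lemma L2norm2_fin f : in_L2 mu f -> L2norm2 f \is a fin_num.
Proof. by case=> _ _ h; rewrite ge0_fin_numE // L2norm2_ge0. Qed.

Lemma L2norm2_comb_lty f g (a b : R) : 0 <= a -> 0 <= b -> in_L2 mu f -> in_L2 mu g ->
  (a%:E * L2norm2 f + b%:E * L2norm2 g < +oo)%E.
Proof. by move=> a0 b0 [_ _ ?] [_ _ ?]; apply: lty_comb => //; exact: L2norm2_ge0. Qed.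

Lemma integral_le_comb (F G H : R -> R) (a b : R) : 0 <= a -> 0 <= b ->
  measurable_fun setT F -> measurable_fun setT G -> measurable_fun setT H ->
  (forall x, 0 <= F x) -> (forall x, 0 <= G x) -> (forall x, 0 <= H x) ->
  (forall x, F x <= a * G x + b * H x) ->
  (\int[mu]_x (F x)%:E <=
   a%:E * \int[mu]_x (G x)%:E + b%:E * \int[mu]_x (H x)%:E)%E.
Proof.
move=> a0 b0 mF mG mH F0 G0 H0 FGH.
have mG' : measurable_fun setT (fun x => (G x)%:E) by apply/measurable_EFinP.
have mH' : measurable_fun setT (fun x => (H x)%:E) by apply/measurable_EFinP.
apply: (@le_trans _ _ (\int[mu]_x (a%:E * (G x)%:E + b%:E * (H x)%:E))%E).
  apply: ge0_le_integral => //.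
  - by move=> x _; rewrite lee_fin.
  - exact/measurable_EFinP.
  - by apply: emeasurable_funD; apply: emeasurable_funM.
  - by move=> x _; rewrite -!EFinM -EFinD lee_fin.
rewrite ge0_integralD //.
- rewrite ge0_integralZl // ?ge0_integralZl // => x _; by rewrite lee_fin.
- by move=> x _; rewrite mule_ge0 // lee_fin.
- exact: emeasurable_funM.
- by move=> x _; rewrite mule_ge0 // lee_fin.
- exact: emeasurable_funM.
Qed.

Lemma L2norm2_le_comb f g h (a b : R) : 0 <= a -> 0 <= b ->
  cmeasurable f -> cmeasurable g -> cmeasurable h ->
  (forall x, cabs2 (f x) <= a * cabs2 (g x) + b * cabs2 (h x)) ->
  (L2norm2 f <= a%:E * L2norm2 g + b%:E * L2norm2 h)%E.
Proof.
move=> a0 b0 mf mg mh fgh.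
by apply: integral_le_comb => // [|||x|x|x]; rewrite ?cabs2_ge0 //; exact: measurable_cabs2.
Qed.

Lemma L2norm2Z (s : R[i]) f : cmeasurable f ->
  L2norm2 (fun x => s * f x) = ((cabs2 s)%:E * L2norm2 f)%E.
Proof.
move=> mf; rewrite /L2norm2 -ge0_integralZl //.
- by apply: eq_integral => x _; rewrite cabs2M.
- exact: measurable_cabs2E.
- by move=> x _; rewrite lee_fin cabs2_ge0.
- by rewrite lee_fin cabs2_ge0.
Qed.

Lemma L2norm2_ek k : L2norm2 (ek k) = mu setT.
Proof.
rewrite /L2norm2 (_ : (fun x => (cabs2 (ek k x))%:E) = cst 1%E); last first.
  by apply/funext => x; rewrite /cabs2 /ek /= cos2Dsin2.
by rewrite integral_cst // mul1e.
Qed.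

Lemma in_L2D f g : in_L2 mu f -> in_L2 mu g -> in_L2 mu (fun x => f x + g x).
Proof.
move=> hf hg; have mf := in_L2_cmeasurable hf; have mg := in_L2_cmeasurable hg.
have mfg := cmeasurableD mf mg; split; try by case: mfg.
apply: le_lt_trans (L2norm2_le_comb _ _ mfg mf mg (fun x => cabs2D_le _ _)) _ => //.
exact: L2norm2_comb_lty.
Qed.

Lemma in_L2Z (s : R[i]) f : in_L2 mu f -> in_L2 mu (fun x => s * f x).
Proof.
move=> hf; have [m1 m2] := cmeasurableZ s (in_L2_cmeasurable hf); split => //.
have := L2norm2Z s (in_L2_cmeasurable hf); rewrite /L2norm2 => ->.
rewrite -ge0_fin_numE ?mule_ge0 ?L2norm2_ge0 ?lee_fin ?cabs2_ge0 //.
by rewrite fin_numM // L2norm2_fin.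
Qed.

Lemma in_L2B f g : in_L2 mu f -> in_L2 mu g -> in_L2 mu (fun x => f x - g x).
Proof.
move=> hf hg; have := in_L2D hf (in_L2Z (-1) hg).
by congr in_L2; apply/funext => x; rewrite mulN1r.
Qed.

Lemma in_L2_0 : in_L2 mu (fun _ => 0).
Proof.
split; try exact: measurable_cst.
rewrite (_ : (fun x => (cabs2 (0 : R[i]))%:E) = cst 0%E) ?integral0 ?ltry //.
by apply/funext => x; rewrite /cabs2 /= expr0n /= addr0.
Qed.

Lemma in_L2_ek k : in_L2 mu (ek k).
Proof.
have [m1 m2] := cmeasurable_ek R k; split => //.
by have := L2norm2_ek k; rewrite /L2norm2 => ->; exact: fin_num_fun_lty (fin_num_measure mu).
Qed.

Lemma in_L2_sum (I : Type) (r : seq I) (F : I -> R -> R[i]) :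
  (forall j, in_L2 mu (F j)) -> in_L2 mu (fun x => \sum_(j <- r) F j x).
Proof.
move=> hF; elim: r => [|a r IH].
  by under eq_fun do rewrite big_nil; exact: in_L2_0.
under eq_fun do rewrite big_cons; exact: in_L2D.
Qed.

Lemma L2norm2_eq0_ae f : in_L2 mu f -> L2norm2 f = 0%E -> {ae mu, forall x, f x = 0}.
Proof.
move=> hf f0; have mf := measurable_cabs2E (in_L2_cmeasurable hf).
have : (\int[mu]_x `|(cabs2 (f x))%:E| = 0)%E.
  by rewrite -f0; apply: eq_integral => x _; rewrite gee0_abs // lee_fin cabs2_ge0.
move/(ae_eq_integral_abs mu measurableT mf).1; apply: filterS.
by move=> x /(_ I) /= /eqP; rewrite eqe => /eqP; exact: cabs2_eq0.
Qed.

Lemma integral_normr_dotc_le f g t : cmeasurable f -> cmeasurable g -> 0 < t ->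
  (\int[mu]_x (`|dotc (f x) (g x)|)%:E <=
   (t / 2)%:E * L2norm2 f + (1 / (2 * t))%:E * L2norm2 g)%E.
Proof.
move=> mf mg t0; apply: integral_le_comb => //.
- by rewrite divr_ge0 // ltW.
- by rewrite divr_ge0 // mulr_ge0 // ltW.
- exact: measurableT_comp (@normr_measurable R setT) (measurable_dotc mf mg).
- exact: measurable_cabs2.
- exact: measurable_cabs2.
- by move=> x; exact: cabs2_ge0.
- by move=> x; exact: cabs2_ge0.
- by move=> x; exact: normr_dotc_le.
Qed.

Lemma normr_dotL2_le f g t : cmeasurable f -> cmeasurable g -> 0 < t ->
  ((`|dotL2 f g|)%:E <= (t / 2)%:E * L2norm2 f + (1 / (2 * t))%:E * L2norm2 g)%E.
Proof.
move=> mf mg t0; apply: le_trans (integral_normr_dotc_le mf mg t0).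
rewrite /dotL2 /Rintegral.
have [fin|nfin] := boolP ((\int[mu]_x (dotc (f x) (g x))%:E)%E \is a fin_num).
  rewrite -(abse_EFin (fine _)) fineK //; apply: le_abse_integral => //.
  by apply/measurable_EFinP; exact: measurable_dotc.
rewrite (_ : fine _ = 0); last by move: nfin; case: (\int[mu]_x _)%E.
by rewrite normr0; apply: integral_ge0 => x _; rewrite lee_fin.
Qed.

Lemma integrable_dotc f g : in_L2 mu f -> in_L2 mu g ->
  mu.-integrable setT (EFin \o (fun x => dotc (f x) (g x))).
Proof.
move=> hf hg; have mf := in_L2_cmeasurable hf; have mg := in_L2_cmeasurable hg.
apply/integrableP; split; first by apply/measurable_EFinP; exact: measurable_dotc.
apply: le_lt_trans (integral_normr_dotc_le mf mg ltr01) _.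
exact: L2norm2_comb_lty.
Qed.

Lemma dotL2C f g : dotL2 f g = dotL2 g f.
Proof. by apply: eq_Rintegral => x _; rewrite /dotc mulrC (mulrC (Im (f x))). Qed.

Lemma dotL2Dl f1 f2 g : in_L2 mu f1 -> in_L2 mu f2 -> in_L2 mu g ->
  dotL2 (fun x => f1 x + f2 x) g = dotL2 f1 g + dotL2 f2 g.
Proof.
move=> h1 h2 hg; rewrite /dotL2 -RintegralD ?integrable_dotc //.
by apply: eq_Rintegral => x _; rewrite /dotc !raddfD /=; ring.
Qed.

Lemma dotL2Bl f1 f2 g : in_L2 mu f1 -> in_L2 mu f2 -> in_L2 mu g ->
  dotL2 (fun x => f1 x - f2 x) g = dotL2 f1 g - dotL2 f2 g.
Proof.
move=> h1 h2 hg; rewrite /dotL2 -RintegralB ?integrable_dotc //.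
by apply: eq_Rintegral => x _; rewrite /dotc !raddfB /=; ring.
Qed.

Lemma dotL2Br f g1 g2 : in_L2 mu f -> in_L2 mu g1 -> in_L2 mu g2 ->
  dotL2 f (fun x => g1 x - g2 x) = dotL2 f g1 - dotL2 f g2.
Proof. by move=> *; rewrite dotL2C dotL2Bl // dotL2C (dotL2C g2). Qed.

Lemma dotL2_0l g : dotL2 (fun _ => 0) g = 0.
Proof.
rewrite /dotL2 (_ : (fun x => dotc 0 (g x)) = fun _ => 0) ?Rintegral_cst ?mul0r //.
by apply/funext => x; rewrite /dotc /= !mul0r addr0.
Qed.

Lemma dotL2_suml (I : Type) (r : seq I) (F : I -> R -> R[i]) g :
  (forall j, in_L2 mu (F j)) -> in_L2 mu g ->
  dotL2 (fun x => \sum_(j <- r) F j x) g = \sum_(j <- r) dotL2 (F j) g.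
Proof.
move=> hF hg; elim: r => [|a r IH].
  by rewrite big_nil -(dotL2_0l g); congr dotL2; apply/funext => x; rewrite big_nil.
rewrite big_cons -IH -dotL2Dl //; last exact: in_L2_sum.
by congr dotL2; apply/funext => x; rewrite big_cons.
Qed.

Lemma dotL2_sumr (I : Type) (r : seq I) (F : I -> R -> R[i]) g :
  (forall j, in_L2 mu (F j)) -> in_L2 mu g ->
  dotL2 g (fun x => \sum_(j <- r) F j x) = \sum_(j <- r) dotL2 g (F j).
Proof.
by move=> hF hg; rewrite dotL2C dotL2_suml //; apply: eq_bigr => j _; exact: dotL2C.
Qed.

Lemma dotL2_self h : dotL2 h h = fine (L2norm2 h).
Proof. by []. Qed.

Lemma integrable_cosM (c : R) : mu.-integrable setT (EFin \o (fun x => cos (c * x))).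
Proof.
apply: (@le_integrable _ _ _ mu setT measurableT _ (EFin \o cst 1)).
- by apply/measurable_EFinP; exact: measurable_cosM.
- by move=> x _; rewrite /= lee_fin normr1 cos_max.
- exact: finite_measure_integrable_cst.
Qed.

Lemma integrable_sinM (c : R) : mu.-integrable setT (EFin \o (fun x => sin (c * x))).
Proof.
apply: (@le_integrable _ _ _ mu setT measurableT _ (EFin \o cst 1)).
- by apply/measurable_EFinP; exact: measurable_sinM.
- by move=> x _; rewrite /= lee_fin normr1 sin_max.
- exact: finite_measure_integrable_cst.
Qed.

Lemma dotL2_ek (a b : R[i]) (j k : int) :
  dotL2 (fun x => a * ek j x) (fun x => b * ek k x) =
  Re (a * b^*%C * cintegral mu (ek (j - k))).
Proof.
set p := a * b^*%C; set c : R := 2 * pi * (j - k)%:~R.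
rewrite /dotL2 (_ : (fun x => _) = fun x => Re p * cos (c * x) - Im p * sin (c * x)).
  have icos := integrableZl measurableT (Re p) (integrable_cosM c).
  have isin := integrableZl measurableT (Im p) (integrable_sinM c).
  rewrite RintegralB // !RintegralZl ?integrable_cosM ?integrable_sinM //.
  by rewrite complexReM.
apply/funext => x; rewrite /dotc /p /c /ek !complexReM !complexImM /=; clear p c.
rewrite (_ : 2 * pi * (j - k)%:~R * x = 2 * pi * j%:~R * x - 2 * pi * k%:~R * x).
  by rewrite cosB sinB; case: a => a1 a2; case: b => b1 b2 /=; ring.
by rewrite intrB; ring.
Qed.

End L2.

Lemma finite_set_uniq_seq (T : choiceType) (A : set T) :
  finite_set A -> exists2 r : seq T, uniq r & A `<=` [set` r].
Proof.
by case/finite_fsetP => X ->; exists (finmap.enum_fset X).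
Qed.

Section FiniteSupport.
Variable R : realType.
Implicit Types (c d : int -> R[i]).

Lemma finsupp0 : finsupp (fun _ : int => 0 : R[i]).
Proof.
rewrite /finsupp (_ : [set k | _] = set0) //.
by apply/seteqP; split => k //=; rewrite eqxx.
Qed.

Lemma finsupp_lin (a : R[i]) c d : finsupp c -> finsupp d ->
  finsupp (fun k => a * c k + d k).
Proof.
move=> fc fd; have fcd : finite_set ([set k | c k != 0] `|` [set k | d k != 0]).
  by rewrite finite_setU.
apply: (sub_finite_set _ fcd) => k /=.
by have [->|ck] := eqVneq (c k) 0; [rewrite mulr0 add0r; right|left].
Qed.

Lemma finsupp_sub c d : finsupp c -> finsupp d -> finsupp (fun k => c k - d k).
Proof.
move=> fc fd; have := finsupp_lin (-1) fd fc.
by congr finsupp; apply/funext => k; rewrite mulN1r addrC.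
Qed.

Lemma Fop_seq c (r : seq int) x : uniq r -> [set k | c k != 0] `<=` [set` r] ->
  Fop c x = \sum_(k <- r) c k * ek k x.
Proof.
move=> ur cr; rewrite /Fop fsbig_supp (fsbig_fwiden r) //.
- move=> k [_ /= nz]; apply: cr; apply/eqP => ck0; apply: nz.
  by rewrite /= ck0 mul0r.
- move=> k [_ hk] /=; have [//|nz] := eqVneq (c k * ek k x) 0.
  by exfalso; apply: hk; split => //; exact/eqP.
Qed.

Lemma Fop0 x : Fop (fun _ : int => 0 : R[i]) x = 0.
Proof. by rewrite (@Fop_seq _ [::]) ?big_nil // => k /=; rewrite eqxx. Qed.

Lemma Fop_lin (a : R[i]) c d x : finsupp c -> finsupp d ->
  Fop (fun k => a * c k + d k) x = a * Fop c x + Fop d x.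
Proof.
move=> fc fd; have fcd : finite_set ([set k | c k != 0] `|` [set k | d k != 0]).
  by rewrite finite_setU.
have [r ur cdr] := finite_set_uniq_seq fcd.
have cr : [set k | c k != 0] `<=` [set` r] by move=> k ck; apply: cdr; left.
have dr : [set k | d k != 0] `<=` [set` r] by move=> k dk; apply: cdr; right.
rewrite !(@Fop_seq _ r) //; last first.
  move=> k /= h; have [ck|ck] := eqVneq (c k) 0; last exact: cr.
  by apply: dr; move: h; rewrite /= ck mulr0 add0r.
rewrite mulr_sumr -big_split /=; apply: eq_bigr => k _; ring.
Qed.

Lemma Fop_sub c d x : finsupp c -> finsupp d ->
  Fop (fun k => c k - d k) x = Fop c x - Fop d x.
Proof.
move=> fc fd; have := Fop_lin (-1) x fd fc.
rewrite mulN1r addrC => <-; congr Fop; apply/funext => k; ring.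
Qed.

Lemma in_L2_Fop (mu : {finite_measure set R -> \bar R}) c : finsupp c -> in_L2 mu (Fop c).
Proof.
move=> fc; have [r ur cr] := finite_set_uniq_seq fc.
rewrite (_ : Fop c = fun x => \sum_(k <- r) c k * ek k x).
  by apply: in_L2_sum => k; apply: in_L2Z; exact: in_L2_ek.
by apply/funext => x; exact: Fop_seq.
Qed.

End FiniteSupport.

Section NullLimit.
Variable R : realType.
Variable mu : {finite_measure set R -> \bar R}.
Variable M : R.
Hypothesis moments_sum : (\esum_(k in [set: int]) (cabs2 (cintegral mu (ek k)))%:E = M%:E)%E.

Lemma sum_cabs2_cintegral_le (k : int) (r : seq int) : uniq r ->
  \sum_(j <- r) cabs2 (cintegral mu (ek (j - k))) <= M.
Proof.
move=> ur; rewrite -lee_fin -moments_sum.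
rewrite (_ : \sum_(j <- r) _ = \sum_(i <- map (fun j => j - k) r) cabs2 (cintegral mu (ek i))).
  by apply: sum_le_esum => [|i]; [rewrite map_inj_uniq // => i j /addIr|exact: cabs2_ge0].
by rewrite big_map.
Qed.

Lemma normr_dotL2_Fop_ek_le (w : int -> R[i]) (r : seq int) (s : R[i]) k t :
  0 < t -> uniq r -> [set j | w j != 0] `<=` [set` r] ->
  `|dotL2 mu (Fop w) (fun x => s * ek k x)| <=
  t / 2 * \sum_(j <- r) cabs2 (w j) + 1 / (2 * t) * (cabs2 s * M).
Proof.
move=> t0 ur wr.
have ekL2 (a : R[i]) j : in_L2 mu (fun x => a * ek j x) by apply: in_L2Z; exact: in_L2_ek.
rewrite (_ : Fop w = fun x => \sum_(j <- r) w j * ek j x); last first.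
  by apply/funext => x; exact: Fop_seq.
rewrite dotL2_suml //; under eq_bigr do rewrite dotL2_ek -mulrA.
apply: le_trans (ler_norm_sum _ _ _) _.
apply: (@le_trans _ _ (\sum_(j <- r) (t / 2 * cabs2 (w j) +
    1 / (2 * t) * (cabs2 s * cabs2 (cintegral mu (ek (j - k))))))).
  apply: ler_sum => j _; apply: le_trans (normr_ReM_le _ _ t0) _.
  by rewrite cabs2M cabs2_conjc.
rewrite big_split /= -!mulr_sumr lerD2l.
apply: ler_wpM2l; first by rewrite divr_ge0 // mulr_ge0 // ltW.
by apply: ler_wpM2l; [exact: cabs2_ge0|exact: sum_cabs2_cintegral_le].
Qed.

Variables (h : R -> R[i]) (w : nat -> int -> R[i]).
Hypotheses (hL2 : in_L2 mu h) (w_finsupp : forall n, finsupp (w n)).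
Hypothesis w_cvg0 : l2dist2 (w n) (fun _ => 0) @[n --> \oo] --> 0%E.
Hypothesis Fop_w_cvg : L2dist2 mu h (Fop (w n)) @[n --> \oo] --> 0%E.

Lemma near_sum_cabs2_w_le e : 0 < e ->
  \forall n \near \oo, forall r, uniq r -> \sum_(j <- r) cabs2 (w n j) <= e.
Proof.
move=> e0; have w0 n : (0 <= l2dist2 (w n) (fun _ => 0%R))%E.
  by apply: esum_ge0 => k _; rewrite lee_fin cabs2_ge0.
apply: filterS ((nonneg_cvg0P w0).1 w_cvg0 e e0) => n wn r ur.
rewrite -lee_fin; apply: le_trans wn; under eq_bigr do rewrite -[w n _]subr0.
by apply: sum_le_esum => // j; exact: cabs2_ge0.
Qed.

Lemma near_L2norm2_sub_Fop_w_le e : 0 < e ->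
  \forall n \near \oo, (L2norm2 mu (fun x => (h x - Fop (w n) x)%R) <= e%:E)%E.
Proof. by apply: (nonneg_cvg0P (fun n => L2norm2_ge0 _ _)).1. Qed.

Lemma dotL2_ek_eq0 (s : R[i]) k : dotL2 mu h (fun x => s * ek k x) = 0.
Proof.
have ekL2 : in_L2 mu (fun x => s * ek k x) by apply: in_L2Z; exact: in_L2_ek.
pose m := fine (mu setT).
have m0 : 0 <= m by rewrite fine_ge0.
have M0 : 0 <= M.
  by rewrite -lee_fin -moments_sum; apply: esum_ge0 => i _; rewrite lee_fin cabs2_ge0.
apply/eqP; rewrite -normr_le0.
apply: (@le0_of_le_div_add_mul _ _ (cabs2 s * (m + M) / 2)).
  by rewrite divr_ge0 // mulr_ge0 ?cabs2_ge0 ?addr_ge0.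
move=> t e t0 e0.
have [n [hn wn]] := filter_ex (filterI (near_L2norm2_sub_Fop_w_le e0) (near_sum_cabs2_w_le e0)).
have [r ur wr] := finite_set_uniq_seq (w_finsupp n).
have hFwL2 : in_L2 mu (fun x => h x - Fop (w n) x) by apply: in_L2B => //; exact: in_L2_Fop.
have dec : dotL2 mu h (fun x => s * ek k x) =
    dotL2 mu (fun x => h x - Fop (w n) x) (fun x => s * ek k x) +
    dotL2 mu (Fop (w n)) (fun x => s * ek k x).
  by rewrite dotL2Bl ?subrK //; exact: in_L2_Fop.
have b1 : `|dotL2 mu (fun x => h x - Fop (w n) x) (fun x => s * ek k x)| <=
    t / 2 * e + 1 / (2 * t) * (cabs2 s * m).
  apply: (le_comb_of_lee _ _ (normr_dotL2_le mu _ _ t0) hn).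
  - by rewrite divr_ge0 // ltW.
  - by rewrite divr_ge0 // mulr_ge0 // ltW.
  - exact: in_L2_cmeasurable hFwL2.
  - exact: in_L2_cmeasurable ekL2.
  - rewrite L2norm2Z; last exact: cmeasurable_ek.
    by rewrite L2norm2_ek /m EFinM fineK ?fin_num_measure.
have b2 : `|dotL2 mu (Fop (w n)) (fun x => s * ek k x)| <=
    t / 2 * e + 1 / (2 * t) * (cabs2 s * M).
  apply: le_trans (normr_dotL2_Fop_ek_le s k t0 ur wr) _.
  by rewrite lerD2r; apply: ler_wpM2l; [rewrite divr_ge0 // ltW|exact: wn].
rewrite dec; apply: le_trans (ler_normD _ _) _.
have -> : cabs2 s * (m + M) / 2 / t =
    1 / (2 * t) * (cabs2 s * m) + 1 / (2 * t) * (cabs2 s * M).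
  by field; rewrite gt_eqF.
have -> : t * e = t / 2 * e + t / 2 * e by field.
lra.
Qed.

Lemma dotL2_Fop_eq0 c : finsupp c -> dotL2 mu h (Fop c) = 0.
Proof.
move=> fc; have [r ur cr] := finite_set_uniq_seq fc.
rewrite (_ : Fop c = fun x => \sum_(j <- r) c j * ek j x); last first.
  by apply/funext => x; exact: Fop_seq.
rewrite dotL2_sumr //; last by move=> j; apply: in_L2Z; exact: in_L2_ek.
by rewrite big1 // => j _; exact: dotL2_ek_eq0.
Qed.

Lemma ae_eq0_of_Fop_null_limit : {ae mu, forall x, h x = 0}.
Proof.
have hfin := L2norm2_fin hL2.
apply: L2norm2_eq0_ae => //; rewrite -[L2norm2 mu h]fineK //; congr EFin.
set N := fine (L2norm2 mu h).
have N0 : 0 <= N by rewrite fine_ge0 // L2norm2_ge0.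
apply/eqP; rewrite eq_le N0 andbT.
apply: (@le0_of_le_div_add_mul _ _ (N / 2)); first by rewrite divr_ge0.
move=> t e t0 e0.
have [n hn] := filter_ex (near_L2norm2_sub_Fop_w_le e0).
have FwL2 := in_L2_Fop mu (w_finsupp n).
have hFwL2 : in_L2 mu (fun x => h x - Fop (w n) x) by exact: in_L2B.
rewrite {1}(_ : N = dotL2 mu (fun x => h x - Fop (w n) x) h); last first.
  by rewrite /N -dotL2_self [RHS]dotL2C dotL2Br // dotL2_Fop_eq0 // subr0.
have hN : (L2norm2 mu h <= N%:E)%E by rewrite fineK.
apply: le_trans (ler_norm _) _.
apply: le_trans (le_comb_of_lee _ _ (normr_dotL2_le mu _ _ t0) hn hN) _.
- by rewrite divr_ge0 // ltW.
- by rewrite divr_ge0 // mulr_ge0 // ltW.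
- exact: in_L2_cmeasurable hFwL2.
- exact: in_L2_cmeasurable hL2.
have -> : N / 2 / t = 1 / (2 * t) * N by field; rewrite gt_eqF.
have : 0 <= t * e by rewrite mulr_ge0 // ltW.
rewrite (_ : t / 2 * e = t * e / 2); last by rewrite mulrAC.
lra.
Qed.

End NullLimit.

Section GraphClosure.
Variable R : realType.
Variable mu : {finite_measure set R -> \bar R}.
Implicit Types (c d : int -> R[i]) (f g : R -> R[i]).

Lemma l2dist2_ge0 c d : (0 <= l2dist2 c d)%E.
Proof. by apply: esum_ge0 => k _; rewrite lee_fin cabs2_ge0. Qed.

Lemma graph_closure0 : graph_closure mu (fun _ => 0, fun _ => 0).
Proof.
have cabs20 : cabs2 (0 : R[i]) = 0 by rewrite /cabs2 /= expr0n /= addr0.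
split => /=; first by rewrite /in_l2 esum1 ?ltry // => k _; rewrite cabs20.
  exact: in_L2_0.
exists (fun _ _ => 0); split; first by move=> n; exact: finsupp0.
  rewrite (_ : (fun n => _) = fun _ => 0%E); first exact: cvg_cst.
  by apply/funext => n; rewrite /l2dist2 esum1 // => k _; rewrite subr0 cabs20.
rewrite (_ : (fun n => _) = fun _ => 0%E); first exact: cvg_cst.
apply/funext => n; rewrite /L2dist2 (_ : (fun x => _) = cst 0%E) ?integral0 //.
by apply/funext => x; rewrite Fop0 subr0 cabs20.
Qed.

Lemma graph_closure_lin (a : R[i]) c d g g' :
  graph_closure mu (c, g) -> graph_closure mu (d, g') ->
  graph_closure mu (fun k => a * c k + d k, fun x => a * g x + g' x).
Proof.
case=> /= hc hg [u [fu cu Fu]]; case=> /= hd hg' [v [fv cv Fv]].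
have a0 : 0 <= 2 * cabs2 a by rewrite mulr_ge0 ?cabs2_ge0.
have agL2 : in_L2 mu (fun x => a * g x + g' x) by apply: in_L2D => //; exact: in_L2Z.
split => /=; last (exists (fun n k => a * u n k + v n k); split).
- have cd_le : (\esum_(k in [set: int]) (cabs2 (a * c k + d k))%:E <=
      (2 * cabs2 a)%:E * (\esum_(k in [set: int]) (cabs2 (c k))%:E) +
      2%:E * (\esum_(k in [set: int]) (cabs2 (d k))%:E))%E.
    apply: esum_cabs2_le => // k.
    by apply: le_trans (cabs2D_le _ _) _; rewrite cabs2M mulrA.
  apply: le_lt_trans cd_le _.
  by apply: lty_comb => //; apply: esum_ge0 => k _; rewrite lee_fin cabs2_ge0.
- exact: agL2.
- by move=> n; exact: finsupp_lin.
- apply: (cvg0_le_comb a0 (ler0n _ 2) (fun n => l2dist2_ge0 _ _) (fun n => l2dist2_ge0 _ _)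
    (fun n => l2dist2_ge0 _ _) _ cu cv) => // n.
  by apply: esum_cabs2_le => // k; exact: cabs2_linB_le.
apply: (cvg0_le_comb a0 (ler0n _ 2) (fun n => L2norm2_ge0 _ _) (fun n => L2norm2_ge0 _ _)
    (fun n => L2norm2_ge0 _ _) _ Fu Fv) => // n.
have FuL2 := in_L2_Fop mu (fu n); have FvL2 := in_L2_Fop mu (fv n).
apply: L2norm2_le_comb => //.
- apply/in_L2_cmeasurable/(in_L2B _ agL2).
  by apply: in_L2_Fop; exact: finsupp_lin.
- exact: in_L2_cmeasurable (in_L2B FuL2 hg).
- exact: in_L2_cmeasurable (in_L2B FvL2 hg').
- by move=> x; rewrite Fop_lin //; exact: cabs2_linB_le.
Qed.

Lemma graph_closure_ae c f g : graph_closure mu (c, f) -> in_L2 mu g ->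
  {ae mu, forall x, g x = f x} -> graph_closure mu (c, g).
Proof.
case=> /= hc hf [u [fu cu Fu]] hg gf; split => //; exists u; split => //.
rewrite (_ : (fun n => L2dist2 mu (Fop (u n)) g) = (fun n => L2dist2 mu (Fop (u n)) f)) //.
apply/funext => n; have FuL2 := in_L2_Fop mu (fu n).
apply: ae_eq_integral => //.
- exact: measurable_cabs2E (in_L2_cmeasurable (in_L2B FuL2 hg)).
- exact: measurable_cabs2E (in_L2_cmeasurable (in_L2B FuL2 hf)).
- by apply: filterS gf => x gfx _; rewrite gfx.
Qed.

(* [g1 - g2] is the limit of [F (u_n - v_n)] with [u_n - v_n -> 0]. *)
Lemma graph_closure_uniq c g1 g2 :
  (\esum_(k in [set: int]) (cabs2 (cintegral mu (ek k)))%:E < +oo)%E ->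
  graph_closure mu (c, g1) -> graph_closure mu (c, g2) ->
  {ae mu, forall x, g1 x = g2 x}.
Proof.
move=> moments_fin [/= _ hg1 [u [fu cu Fu]]] [/= _ hg2 [v [fv cv Fv]]].
have moments0 : (0 <= \esum_(k in [set: int]) (cabs2 (cintegral mu (ek k)))%:E)%E.
  by apply: esum_ge0 => k _; rewrite lee_fin cabs2_ge0.
have hM : (\esum_(k in [set: int]) (cabs2 (cintegral mu (ek k)))%:E =
    (fine (\esum_(k in [set: int]) (cabs2 (cintegral mu (ek k)))%:E))%:E)%E.
  by rewrite fineK // ge0_fin_numE.
have fw n := finsupp_sub (fu n) (fv n).
apply: filterS (ae_eq0_of_Fop_null_limit hM (in_L2B hg1 hg2) fw _ _) => [x /eqP||].
- by rewrite subr_eq0 => /eqP.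
- apply: (cvg0_le_comb (ler0n _ 2) (ler0n _ 2) (fun n => l2dist2_ge0 _ _)
    (fun n => l2dist2_ge0 _ _) (fun n => l2dist2_ge0 _ _) _ cu cv) => n.
  apply: esum_cabs2_le => // k.
  by rewrite (_ : _ - 0 = (u n k - c k) - (v n k - c k)) ?cabs2B_le //; ring.
apply: (cvg0_le_comb (ler0n _ 2) (ler0n _ 2) (fun n => L2norm2_ge0 _ _)
    (fun n => L2norm2_ge0 _ _) (fun n => L2norm2_ge0 _ _) _ Fv Fu) => n.
have FuL2 := in_L2_Fop mu (fu n); have FvL2 := in_L2_Fop mu (fv n).
apply: L2norm2_le_comb => //.
- exact: in_L2_cmeasurable (in_L2B (in_L2B hg1 hg2) (in_L2_Fop mu (fw n))).
- exact: in_L2_cmeasurable (in_L2B FvL2 hg2).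
- exact: in_L2_cmeasurable (in_L2B FuL2 hg1).
- move=> x; rewrite Fop_sub //.
  by rewrite (_ : _ - _ = (Fop (v n) x - g2 x) - (Fop (u n) x - g1 x)) ?cabs2B_le //; ring.
Qed.

End GraphClosure.

Unset Implicit Arguments.
Set Strict Implicit.

Theorem lemma3p5 (R : realType) (mu : {finite_measure set R -> \bar R}) :
  mu (~` `[0%R, 1%R]) = 0%E ->
  (\esum_(k in [set: int]) (cabs2 (cintegral mu (ek k)))%:E < +oo)%E ->
  closable mu.
Proof.
move=> _ moments_fin.
pose Dom c := exists g, graph_closure mu (c, g).
pose T c := if pselect (Dom c) is left H then projT1 (cid H) else fun _ : R => 0 : R[i].
have graphT c : Dom c -> graph_closure mu (c, T c).
  by rewrite /T; case: pselect => // H _; exact: projT2 (cid H).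
have DomD a c d : Dom c -> Dom d -> Dom (fun k => a * c k + d k).
  by move=> [g Sg] [g' Sg']; exists (fun x => a * g x + g' x); exact: graph_closure_lin.
exists Dom, T; split.
- by exists (fun _ => 0); exact: graph_closure0.
- exact: DomD.
- by move=> c /graphT [].
- move=> a c d Dc Dd; apply: graph_closure_uniq moments_fin (graphT _ (DomD _ _ _ Dc Dd)) _.
  exact: graph_closure_lin (graphT _ Dc) (graphT _ Dd).
- move=> c g hg; split => [Scg|[Dc ae]].
    have Dc : Dom c by exists g.
    by split => //; exact: graph_closure_uniq moments_fin Scg (graphT _ Dc).
  exact: graph_closure_ae (graphT _ Dc) hg ae.
Qed.
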